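(* Let $B$ be a nonzero real constant and let $(x_n)_{n\ge0}$ be a (well-defined) solution of $$x_{n+10}=\frac{x_n}{-1+B\,x_nx_{n+2}x_{n+4}x_{n+6}x_{n+8}},\qquad n\ge 0,$$ with initial conditions $x_0,\dots,x_9$. Then the solution is periodic with period $20$, i.e. $x_{n+20}=x_n$ for all $n\ge 0$; explicitly, for $k\in\{0,\dots,9\}$ and $P_k=x_{\tau(k)}x_{\tau(k)+2}x_{\tau(k)+4}x_{\tau(k)+6}x_{\tau(k)+8}$, one has $x_{10+k}=x_k/(-1+BP_k)$ if $\lfloor k/2\rfloor$ is even and $x_{10+k}=x_k(-1+BP_k)$ if $\lfloor k/2\rfloor$ is odd.
   Context: $\tau(k)\in\{0,1\}$ is the remainder of $k$ upon division by $2$, and $\lfloor\cdot\rfloor$ is the floor function. *)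

From Stdlib Require Export Reals Arith.
Open Scope R_scope.

Definition tau (k : nat) : nat := Nat.modulo k 2.

Definition P5 (x : nat -> R) (n : nat) : R :=
  x n * x (n + 2)%nat * x (n + 4)%nat * x (n + 6)%nat * x (n + 8)%nat.

Definition is_solution (B : R) (x : nat -> R) : Prop :=
  forall n : nat, -1 + B * P5 x n <> 0 /\
    x (n + 10)%nat = x n / (-1 + B * P5 x n).

From Stdlib Require Import Reals Arith Lia.
Open Scope R_scope.

(* Write D_n = -1 + B P_n, where P_n = x_n x_{n+2} ... x_{n+8}.  The recurrence
   reads x_{n+10} = x_n / D_n, so shifting the window of P by two replaces the
   factor x_n by x_{n+10} and P_{n+2} = P_n / D_n; hence D_{n+2} = 1 / D_n.
   Thus D_{n+2j} is D_n or 1 / D_n according to the parity of j.  Writing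
   k = tau(k) + 2 floor(k/2) gives the formula for x_{10+k}, and
   x_{n+20} = x_n / (D_n D_{n+10}) = x_n. *)

Definition denom (B : R) (x : nat -> R) (n : nat) : R := -1 + B * P5 x n.

Section Solution.

Variables (B : R) (x : nat -> R).
Hypothesis hx : is_solution B x.

Lemma denom_neq0 (n : nat) : denom B x n <> 0.
Proof. exact (proj1 (hx n)). Qed.

Lemma solution_step (n : nat) : x (n + 10)%nat = x n / denom B x n.
Proof. exact (proj2 (hx n)). Qed.

Lemma P5_shift2 (n : nat) : P5 x (n + 2) = P5 x n / denom B x n.
Proof.
  pose proof (denom_neq0 n) as Dn.
  unfold P5.
  replace (n + 2 + 2)%nat with (n + 4)%nat by lia.
  replace (n + 2 + 4)%nat with (n + 6)%nat by lia.
  replace (n + 2 + 6)%nat with (n + 8)%nat by lia.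
  replace (n + 2 + 8)%nat with (n + 10)%nat by lia.
  rewrite solution_step.
  field; exact Dn.
Qed.

Lemma denom_shift2 (n : nat) : denom B x (n + 2) = / denom B x n.
Proof.
  pose proof (denom_neq0 n) as Dn.
  unfold denom at 1.
  rewrite P5_shift2.
  unfold denom in *.
  field; exact Dn.
Qed.

Lemma denom_shift_double (n j : nat) :
  denom B x (n + 2 * j) =
  if Nat.even j then denom B x n else / denom B x n.
Proof.
  induction j as [|j IH].
  - rewrite Nat.add_0_r; reflexivity.
  - replace (n + 2 * S j)%nat with (n + 2 * j + 2)%nat by lia.
    rewrite denom_shift2, IH, Nat.even_succ, <- Nat.negb_even.
    destruct (Nat.even j); simpl.
    + reflexivity.
    + apply Rinv_inv.
Qed.

End Solution.

Theorem theorem1 (B : R) (x : nat -> R) (hB : B <> 0) (hx : is_solution B x) :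
  (forall n : nat, x (n + 20)%nat = x n) /\
  (forall k : nat, (k < 10)%nat ->
     let Pk := P5 x (tau k) in
     if Nat.even (Nat.div k 2)
     then x (10 + k)%nat = x k / (-1 + B * Pk)
     else x (10 + k)%nat = x k * (-1 + B * Pk)).
Proof.
  split.
  - intro n.
    replace (n + 20)%nat with (n + 10 + 10)%nat by lia.
    rewrite !(solution_step B x hx).
    replace (n + 10)%nat with (n + 2 * 5)%nat by lia.
    rewrite (denom_shift_double B x hx); simpl.
    pose proof (denom_neq0 B x hx n).
    field; assumption.
  - intros k _; cbv zeta.
    rewrite Nat.add_comm, (solution_step B x hx).
    change (-1 + B * P5 x (tau k)) with (denom B x (tau k)).
    replace (denom B x k) with (denom B x (tau k + 2 * (k / 2)))
      by (f_equal; unfold tau; pose proof (Nat.div_mod_eq k 2); lia).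
    rewrite (denom_shift_double B x hx).
    destruct (Nat.even (k / 2)).
    + reflexivity.
    + unfold Rdiv; rewrite Rinv_inv; reflexivity.
Qed.
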